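(* Let $G$ be a triangulation and $v_0\in V(G)$. For every integer $k\ge 0$, the extended degree-bounded ball satisfies $|V(\bar B_k^8(v_0))|<5^k\, d(v_0)$.
   Context: A triangulation is a simple graph (with at least $4$ vertices) embedded in the sphere all of whose faces are triangles. For a vertex $v_0$ and integer $k\ge0$: $V_1$ is the set of vertices $v_1$ for which there is a path $P$ from $v_0$ to $v_1$ of length at most $k$ all of whose vertices other than $v_0$ have degree at most $8$; $B_k^8(v_0)=G[V_1]$ is the degree-bounded ball. $V_2$ is the set of vertices $v\ne v_0$ of degree at least $9$ for which there is a path from $v_0$ to $v$ of length at most $k$ whose internal vertices all have degree at most $8$. The extended degree-bounded ball is $\bar B_k^8(v_0)=G[V_1\cup V_2]$. *)

(* Triangulations of the sphere are encoded combinatorially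
   as rotation systems (combinatorial maps) of genus 0. *)
From mathcomp Require Import all_boot.
Set Implicit Arguments. Unset Strict Implicit. Unset Printing Implicit Defensive.

Section Triang.
Variable T : finType.

Definition simple_graph (e : rel T) : Prop :=
  symmetric e /\ irreflexive e.

Definition deg (e : rel T) (v : T) : nat := #|[set u | e v u]|.

Definition darts (e : rel T) : {set T * T} := [set p | e p.1 p.2].

Definition edges (e : rel T) : {set {set T}} :=
  [set [set p.1; p.2] | p in darts e].

(* rot v : the cyclic successor of a neighbour of v around v *)
Definition rotation_system (e : rel T) (rot : T -> T -> T) : Prop :=
  [/\ forall v u, e v u -> e v (rot v u),
      forall v u w, e v u -> e v w -> rot v u = rot v w -> u = w
    & forall v u w, e v u -> e v w -> exists n, iter n (rot v) u = w].

Definition face_step (rot : T -> T -> T) (p : T * T) : T * T :=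
  (p.2, rot p.2 p.1).

Definition face_of (rot : T -> T -> T) (p : T * T) : {set T * T} :=
  [set q | fconnect (face_step rot) p q].

Definition faces (e : rel T) (rot : T -> T -> T) : {set {set T * T}} :=
  [set face_of rot p | p in darts e].

(* A triangulation: simple connected graph with >= 4 vertices together with an
   embedding in the sphere (rotation system with Euler characteristic 2),
   all of whose faces are triangles (have exactly 3 darts). *)
Definition sphere_triangulation (e : rel T) (rot : T -> T -> T) : Prop :=
  [/\ simple_graph e /\ 3 < #|T|,
      forall x y : T, connect e x y,
      rotation_system e rot,
      #|T| + #|faces e rot| = #|edges e| + 2
    & forall p, p \in darts e -> #|face_of rot p| = 3].

(* A path from v0 of length n (number of edges) is encoded by the sequence p of
   its vertices after v0: v0 :: p is an e-path without repeated vertices. *)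
Definition is_path (e : rel T) (v0 : T) (p : seq T) : bool :=
  path e v0 p && uniq (v0 :: p).

Definition ball_V1 (e : rel T) (k : nat) (v0 : T) : {set T} :=
  [set v1 | [exists n : 'I_k.+1, exists p : n.-tuple T,
     [&& is_path e v0 p, last v0 p == v1 & all (fun x => deg e x <= 8) p]]].

Definition ball_V2 (e : rel T) (k : nat) (v0 : T) : {set T} :=
  [set v | (v != v0) && (9 <= deg e v) &&
     [exists n : 'I_k.+1, exists p : n.-tuple T,
       [&& is_path e v0 p, last v0 p == v
         & all (fun x => deg e x <= 8) (behead (belast v0 p))]]].

Definition ext_ball (e : rel T) (k : nat) (v0 : T) : {set T} :=
  ball_V1 e k v0 :|: ball_V2 e k v0.
End Triang.

From mathcomp Require Import all_boot zify.
Set Implicit Arguments. Unset Strict Implicit. Unset Printing Implicit Defensive.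

(* Explore from v0 along darts (p, u), "standing at u, having come from p",
   continuing only from vertices of degree at most 8.  A neighbour of u that
   equals p or is adjacent to p has already been reached one step earlier
   (through p), so only the remaining "fresh" neighbours need new darts.  In a
   triangulation the edge pu lies on two distinct triangles, so u has two
   common neighbours with p and at most deg u - 3 <= 5 fresh neighbours.
   Hence step j produces at most 5^j d(v0) darts, and the extended ball has
   at most 1 + d(v0)(1 + 5 + ... + 5^(k-1)) < 5^k d(v0) vertices, as
   d(v0) >= 2. *)

Lemma leq_card_bigcup (I T : finType) (P : {pred I}) (F : I -> {set T}) :
  #|\bigcup_(i in P) F i| <= \sum_(i in P) #|F i|.
Proof.
elim/big_rec2: _ => [|i A n _ IHn]; first by rewrite cards0.
exact: leq_trans (leq_card_setU _ _).1 (leq_add _ IHn).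
Qed.

Lemma rot_swap_nbrs (T : finType) (e : rel T) rot v a b y :
  rotation_system e rot -> e v a -> rot v a = b -> rot v b = a -> e v y ->
  y \in [:: a; b].
Proof.
case=> _ _ rot_trans va ab ba vy; have [n <-] := rot_trans _ _ _ va vy.
elim: n => [|n] /=; rewrite !inE ?eqxx // => /orP[] /eqP ->.
  by rewrite ab eqxx orbT.
by rewrite ba eqxx.
Qed.

Definition fresh_nbrs (T : finType) (e : rel T) (p u : T) : {set T} :=
  [set w | [&& e u w, w != p & ~~ e p w]].

Definition next_darts (T : finType) (e : rel T) (d : T * T) : {set T * T} :=
  if deg e d.2 <= 8 then [set (d.2, w) | w in fresh_nbrs e d.1 d.2] else set0.

Section Triangulation.
Variables (T : finType) (e : rel T) (rot : T -> T -> T).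
Hypothesis tri : sphere_triangulation e rot.

Lemma face_step_dart d : d \in darts e -> face_step rot d \in darts e.
Proof.
have [[[sym _] _] _ [rot_nbr _ _] _ _] := tri.
by case: d => a b; rewrite !inE /= => ab; apply: rot_nbr; rewrite sym.
Qed.

Lemma face_step_inj : {in darts e &, injective (face_step rot)}.
Proof.
have [[[sym _] _] _ [_ rot_inj _] _ _] := tri.
move=> [a b] [c d]; rewrite !inE /= => ab cd [db ac]; subst d.
by rewrite (rot_inj b a c _ _ ac) // sym.
Qed.

Lemma iter3_face_step d : d \in darts e -> iter 3 (face_step rot) d = d.
Proof.
have [_ _ _ _ face3] := tri.
set f := face_step rot => dd.
have ord3 : order f d = 3 by rewrite -(face3 _ dd) /face_of cardsE.
have d1 : f d \in darts e := face_step_dart dd.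
have d2 : f (f d) \in darts e := face_step_dart d1.
have := orbit_uniq f d; have := fconnect_iter f 3 d.
rewrite fconnect_orbit /orbit ord3 /= !inE -/f.
case/or3P=> /eqP f3 //; rewrite negb_or => /and3P[/andP[_ nd2] nd12 _].
- by rewrite (face_step_inj d2 dd f3) eqxx in nd2.
- by rewrite (face_step_inj d2 d1 f3) eqxx in nd12.
Qed.

Lemma rot_triangle p u : e p u ->
  [/\ e u (rot u p), e p (rot u p), rot (rot u p) u = p & rot p (rot u p) = u].
Proof.
have [[[sym _] _] _ [rot_nbr _ _] _ _] := tri.
move=> pu; have pud : (p, u) \in darts e by rewrite inE.
have := iter3_face_step pud; have := face_step_dart (face_step_dart pud).
rewrite /face_step inE /= => wp [wup]; rewrite wup in wp *.
by split=> //; [apply: rot_nbr; rewrite sym | rewrite sym].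
Qed.

Lemma rot_opposite_neq p u : e p u -> rot u p != rot p u.
Proof.
have [[[sym _] big] conn rs _ _] := tri.
(* Otherwise {p, u, rot u p} would be closed under adjacency, hence all of T. *)
move=> pu; apply/eqP => rot_eq; set x := rot u p in rot_eq.
have up : e u p by rewrite sym.
have [ux px xu_p px_u] := rot_triangle pu.
have [_ _ xp_u ux_p] := rot_triangle up; rewrite -rot_eq -/x in xp_u ux_p.
have xu : e x u by rewrite sym.
have Aclosed : closed e [:: p; u; x].
  apply: (intro_closed (sym_connect_sym sym)) => a b ab.
  rewrite !inE => /or3P[] /eqP ea; subst a.
  - have := rot_swap_nbrs rs pu (esym rot_eq) px_u ab.
    by rewrite !inE => /orP[] ->; rewrite ?orbT.
  - have := rot_swap_nbrs rs up erefl ux_p ab.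
    by rewrite !inE => /orP[] ->; rewrite ?orbT.
  - have := rot_swap_nbrs rs xu xu_p xp_u ab.
    by rewrite !inE => /orP[] ->; rewrite ?orbT.
have : #|T| <= size [:: p; u; x].
  apply: leq_trans (card_size _); apply/subset_leq_card/subsetP => y _.
  by rewrite -(closed_connect Aclosed (conn p y)) !inE eqxx.
by rewrite leqNgt big.
Qed.

Lemma card_fresh_nbrs p u : e p u -> #|fresh_nbrs e p u| + 3 <= deg e u.
Proof.
have [[[sym irr] _] _ _ _ _] := tri.
move=> pu; have up : e u p by rewrite sym.
have [ua pa _ _] := rot_triangle pu; have [pb ub _ _] := rot_triangle up.
have ap : rot u p != p by apply: contraTneq pa => ->; rewrite irr.
have bp : rot p u != p by apply: contraTneq pb => ->; rewrite irr.
rewrite /deg (cardsD1 p [set w | e u w]) (cardsD1 (rot u p) (_ :\ p)).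
rewrite (cardsD1 (rot p u) (_ :\ _ :\ _)) !inE up ua ub ap bp rot_opposite_neq //=.
rewrite addnC !add1n !ltnS; apply/subset_leq_card/subsetP => w.
rewrite !inE => /and3P[uw wp pw]; rewrite uw wp.
by apply/and3P; split=> //; apply/eqP => ew; rewrite ew ?pa ?pb in pw.
Qed.

Lemma deg_ge2 v : 2 <= deg e v.
Proof.
have [[[sym _] big] conn [rot_nbr _ _] _ _] := tri.
have /card_gt0P[y] : 0 < #|[set~ v]| by rewrite cardsC1; lia.
rewrite !inE => yv.
have [[|z q] /= vq yq] := connectP (conn v y); first by rewrite yq eqxx in yv.
have vz : e v z by case/andP: vq.
have [_ vw _ _] := rot_triangle vz.
rewrite /deg (cardsD1 (rot z v)) (cardsD1 (rot v z)) !inE vw rot_nbr //.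
by rewrite rot_opposite_neq // sym.
Qed.

Lemma card_next_darts d : d \in darts e -> #|next_darts e d| <= 5.
Proof.
case: d => p u; rewrite inE /next_darts /= => pu.
case: (leqP (deg e u) 8) => [deg8 | _]; last by rewrite cards0.
rewrite card_imset; last by move=> a b [].
by have := card_fresh_nbrs pu; lia.
Qed.

End Triangulation.

Section Exploration.
Variables (T : finType) (e : rel T) (v0 : T).

Definition passable x := (x == v0) || (deg e x <= 8).

Lemma passable_v0 : passable v0.
Proof. by rewrite /passable eqxx. Qed.

(* [layer j] holds the darts followed at step j + 1 of the exploration and
   [ball j] the vertices reached within j steps. *)
Definition layer j : {set T * T} :=
  iter j (fun D : {set T * T} => \bigcup_(d in D) next_darts e d)
    [set (v0, w) | w in [set w | e v0 w]].

Fixpoint ball j : {set T} :=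
  if j is i.+1 then ball i :|: [set d.2 | d in layer i] else [set v0].

Lemma ball_mono i j : i <= j -> ball i \subset ball j.
Proof.
move=> /subnK <-; elim: (j - i) => [|m IHm] //=.
exact: subset_trans IHm (subsetUl _ _).
Qed.

Lemma ball_v0 i : v0 \in ball i.
Proof. by apply: (subsetP (ball_mono (leq0n i))); rewrite inE. Qed.

Lemma layer_dart j d :
  d \in layer j -> [/\ d \in darts e, d.1 \in ball j & passable d.1].
Proof.
case: j => [|j].
  by case/imsetP=> w; rewrite !inE => vw ->; rewrite /passable /= eqxx vw.
rewrite /layer iterS -/(layer j) => /bigcupP[[p u] pu].
rewrite /next_darts /=.
case: (leqP (deg e u) 8) => [deg8 | _]; last by rewrite inE.
case/imsetP=> w; rewrite !inE => /andP[uw _] ->.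
rewrite /passable deg8 orbT uw; split=> //.
by apply/orP; right; apply/imsetP; exists (p, u).
Qed.

Lemma ball_step i u w : u \in ball i -> passable u -> e u w -> w \in ball i.+1.
Proof.
elim: i u w => [|i IHi] u w.
  rewrite inE => /eqP -> _ vw; rewrite inE; apply/orP; right.
  by apply/imsetP; exists (v0, w); rewrite // imset_f ?inE.
have ball_up := subsetP (ball_mono (leqnSn i.+1)).
rewrite [ball i.+1]/= inE => /orP[ui | /imsetP[[p u'] pu /= ->]] pass_u uw.
  exact/ball_up/(IHi u).
have [_ /= pi /= pass_p] := layer_dart pu.
have [eq_v0 | nv0] := eqVneq u' v0.
  by subst u'; apply/ball_up/(IHi v0 w (ball_v0 i) passable_v0).
have deg8 : deg e u' <= 8 by move: pass_u; rewrite /passable (negbTE nv0).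
have [-> | wp] := eqVneq w p.
  exact/ball_up/(subsetP (ball_mono (leqnSn i))).
have [pw | npw] := boolP (e p w); first exact/ball_up/(IHi p).
rewrite /= inE; apply/orP; right; apply/imsetP; exists (u', w) => //.
apply/bigcupP; exists (p, u') => //; rewrite /next_darts /= deg8.
by apply: imset_f; rewrite inE uw wp npw.
Qed.

Lemma ball_path p x i : x \in ball i -> passable x -> path e x p ->
  all (fun y => deg e y <= 8) (behead (belast x p)) -> last x p \in ball (i + size p).
Proof.
elim: p x i => [|y p IHp] x i xi pass_x /=; first by rewrite addn0.
case/andP=> xy yp; have yi := ball_step xi pass_x xy.
case: p IHp yp => [|z p] IHp yp /=; first by rewrite addn1.
case/andP=> deg8 deg_p; rewrite -addSnnS.
by apply: IHp yp deg_p; rewrite // /passable deg8 orbT.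
Qed.

Lemma ext_ball_subset k : ext_ball e k v0 \subset ball k.
Proof.
have reach n (p : n.-tuple T) : n <= k -> is_path e v0 p ->
    all (fun y => deg e y <= 8) (behead (belast v0 p)) -> last v0 p \in ball k.
  move=> nk /andP[vp _] deg_p.
  have := ball_path (ball_v0 0) passable_v0 vp deg_p; rewrite size_tuple.
  exact: subsetP (ball_mono nk) _.
apply/subsetP => v; rewrite !inE => /orP[].
  case/existsP=> n /existsP[p /and3P[vp /eqP <- deg_p]].
  apply: reach vp _; first by rewrite -ltnS.
  apply/allP=> y y_in; apply: (allP deg_p).
  by case: (tval p) y_in => [|z q] //= /mem_belast.
case/andP=> _ /existsP[n /existsP[p /and3P[vp /eqP <- deg_p]]].
by apply: reach vp deg_p; rewrite -ltnS.
Qed.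

Section Counting.
Variable rot : T -> T -> T.
Hypothesis tri : sphere_triangulation e rot.

Lemma card_layer j : #|layer j| <= 5 ^ j * deg e v0.
Proof.
elim: j => [|j IHj].
  by rewrite card_imset ?mul1n //; move=> a b [].
rewrite /layer iterS -/(layer j).
apply: leq_trans (leq_card_bigcup _ _) _.
apply: leq_trans (_ : _ <= \sum_(d in layer j) 5) _.
  by apply: leq_sum => d /layer_dart[dd _ _]; exact: (card_next_darts tri dd).
by rewrite sum_nat_const mulnC expnS -mulnA leq_mul2l IHj.
Qed.

(* 4 |ball j| <= 4 + d(v0) (5^j - 1), the geometric sum times 4. *)
Lemma card_ball j : 4 * #|ball j| + deg e v0 <= 4 + deg e v0 * 5 ^ j.
Proof.
elim: j => [|j IHj]; first by rewrite cards1 expn0 !muln1.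
have step : #|ball j.+1| <= #|ball j| + 5 ^ j * deg e v0.
  apply: leq_trans (leq_card_setU _ _).1 _; rewrite leq_add2l.
  exact: leq_trans (leq_imset_card _ _) (card_layer j).
by rewrite expnS; move: IHj step; nia.
Qed.
End Counting.
End Exploration.

Theorem lemma6p2 (T : finType) (e : rel T) (rot : T -> T -> T) (v0 : T) (k : nat) :
  sphere_triangulation e rot ->
  #|ext_ball e k v0| < 5 ^ k * deg e v0.
Proof.
move=> tri.
have ext_le := subset_leq_card (ext_ball_subset e v0 k).
have ball_le := card_ball v0 tri k.
have deg2 := deg_ge2 tri v0.
have pos5 : 0 < 5 ^ k by rewrite expn_gt0.
by move: ext_le ball_le deg2 pos5; nia.
Qed.
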